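(* Let $L$ be a finite lattice with at least three elements, with minimum $\hat 0$ and maximum $\hat 1$, and let $a,b\in L$ with $\hat 0<a<b$. Then $$\sum_{\substack{x\in L\\ x\wedge a=\hat 0}} J(x,b,\hat 1)=0,$$ where terms with $x\not\le b$ are omitted (i.e. $J(x,b,\hat 1)$ is taken as $0$ unless $x\le b$).
   Context: Let $\delta_3(x,y,z)=1$ if $x=y=z$ and $0$ otherwise. The function $J$ on triples $x\le y\le z$ of $L$ is the unique integer-valued function satisfying $\sum_{x\le a\le y\le b\le z}J(a,y,b)=\delta_3(x,y,z)$ for all $x\le y\le z$ in $L$ (sum over $a,b\in L$). *)

From HB Require Import structures.
From mathcomp Require Import all_boot all_order all_algebra.
Set Implicit Arguments. Unset Strict Implicit. Unset Printing Implicit Defensive.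
Import Order.TTheory GRing.Theory Num.Theory.
Local Open Scope order_scope.

Definition delta3 {d} {L : finTBLatticeType d} (x y z : L) : int :=
  if (x == y) && (y == z) then 1%R else 0%R.

(* J satisfies the defining relation of the paper's function J:
   for all x <= y <= z,  sum_{x <= a <= y <= b <= z} J(a,y,b) = delta_3(x,y,z).
   (Values of J outside triples u <= v <= w are irrelevant.) *)
Definition is_J {d} {L : finTBLatticeType d} (J : L -> L -> L -> int) : Prop :=
  forall x y z : L, x <= y -> y <= z ->
    (\sum_(a : L | (x <= a)%O && (a <= y)%O) \sum_(b : L | (y <= b)%O && (b <= z)%O) J a y b)%R
    = delta3 x y z.

From HB Require Import structures.
From mathcomp Require Import all_boot all_order all_algebra.
Import Order.TTheory GRing.Theory Num.Theory.
Local Open Scope order_scope.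

(* Summing the defining relation of J over its third argument and inverting
   upwards shows that sum_{y <= x <= b} J(x, b, z) = 0 whenever y < b <= z.
   Group the x <= b according to u = x `&` a: for y <= a, the blocks with
   y <= u <= a together contain exactly the x with y <= x <= b. So the block
   sums of J(-, b, \top) have vanishing interval sums on every [y, a] with
   y <= a, and inverting downwards from a they all vanish, in particular the
   block of \bot. *)

Lemma finPOrder_gt_ind {d} {T : finPOrderType d} (P : T -> Prop) :
  (forall y, (forall u, y < u -> P u) -> P y) -> forall y, P y.
Proof.
move=> IH.
suff: forall n (y : T), (#|[set u | (y < u)%O]| < n)%N -> P y.
  by move=> + y; apply.
elim=> // n IHn y y_small; apply: IH => u yu; apply: IHn.
rewrite -ltnS (leq_trans _ y_small) // ltnS proper_card //; apply/properP; split.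
- by apply/subsetP => v; rewrite !inE; apply: lt_trans.
- by exists u; rewrite !inE ?ltxx.
Qed.

Lemma sum_itv_eq0_below {d} {T : finPOrderType d} {R : nmodType} (f : T -> R)
    (a : T) :
  (forall y, y <= a -> (\sum_(u | (y <= u <= a)%O) f u)%R = 0%R) ->
  forall y, y <= a -> f y = 0%R.
Proof.
move=> sum_eq0; elim/(@finPOrder_gt_ind _ T) => y IH ya.
rewrite -[RHS](sum_eq0 y ya) (bigD1 y) ?lexx ?ya //= big1 ?addr0 //.
move=> u /andP[/andP[yu ua] uy]; apply: IH ua.
by rewrite lt_neqAle eq_sym uy.
Qed.

Lemma sum_itv_eq0_above {d} {T : finPOrderType d} {R : nmodType} (f : T -> R)
    (b : T) :
  (forall z, b <= z -> (\sum_(u | (b <= u <= z)%O) f u)%R = 0%R) ->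
  forall z, b <= z -> f z = 0%R.
Proof.
move=> sum_eq0; apply: (@sum_itv_eq0_below _ T^d) => z bz.
by rewrite -[RHS](sum_eq0 z bz); apply: eq_bigl => u; rewrite andbC.
Qed.

Lemma sum_meet_partition {d} {L : finLatticeType d} {R : nmodType} (F : L -> R)
    (P : pred L) (a y : L) : y <= a ->
  (\sum_(u | (y <= u <= a)%O) \sum_(x | (x `&` a == u)%O && P x) F x
    = \sum_(x | (y <= x)%O && P x) F x)%R.
Proof.
move=> ya.
rewrite [RHS](partition_big (fun x => x `&` a) (fun u => y <= u <= a)); last first.
  by move=> x /andP[yx _]; rewrite lexI yx ya leIr.
apply: eq_bigr => u /andP[yu _]; apply: eq_bigl => x.
case: eqP => [xau | _]; last by rewrite andbF.
by move: yu; rewrite -xau lexI ya andbT andbT => ->.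
Qed.

Lemma sum_J_itv_eq0 {d} {L : finTBLatticeType d} {J : L -> L -> L -> int}
    (HJ : is_J J) {x b z : L} : x < b -> b <= z ->
  (\sum_(u | (x <= u <= b)%O) J u b z)%R = 0%R.
Proof.
move=> xb; move: z.
apply: (@sum_itv_eq0_above _ _ _ (fun z => \sum_(u | (x <= u <= b)%O) J u b z)%R)
  => z bz.
by rewrite exchange_big HJ ?(ltW xb) // /delta3 lt_eqF.
Qed.

Theorem theorem5p10 (d : Order.disp_t) (L : finTBLatticeType d)
  (J : L -> L -> L -> int) (HJ : is_J J)
  (hL : (2 < #|[set: L]|)%N) (a b : L) (h0a : \bot < a) (hab : a < b) :
  (\sum_(x : L | (x `&` a == \bot)%O && (x <= b)%O) J x b \top)%R = 0%R.
Proof.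
pose block u := (\sum_(x | (x `&` a == u)%O && (x <= b)%O) J x b \top)%R.
apply: (@sum_itv_eq0_below _ _ _ block a _ \bot (le0x a)) => y ya.
by rewrite sum_meet_partition // (sum_J_itv_eq0 HJ (le_lt_trans ya hab) (lex1 b)).
Qed.
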